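(* Let $K=2^m$ with $m\in\mathbb{N}$, and let $c\in\mathbb{R}^{K-1}$ be the vector with $c_i=1$ for odd $i$ and $c_i=0$ for even $i$. Suppose $a\in\mathbb{R}^{K-1}$ is written as $a=\mu c+\mu\epsilon$ with $\mu=\frac2K\|a\|_1\in\mathbb{R}$ and $\epsilon\in\mathbb{R}^{K-1}$ satisfying $\sum_i\epsilon_i=0$. Then $$\Psi e^{-\Psi a}=Ke^{-\frac{K\mu}{2}}1_{K-1}-Ke^{-\frac{K\mu}{2}}\mu\,\epsilon+2\big(e^{-K\mu}-e^{-\frac{K\mu}{2}}\big)\big(1-\mu(\Psi\epsilon)_1\big)c+O(\|\epsilon\|_1^2),$$ where the exponential is taken entrywise.
   Context: Sylvester Hadamard matrices: $\Phi_1=(1)$, $\Phi_{2^m}=\begin{bmatrix}\Phi_{2^{m-1}}&\Phi_{2^{m-1}}\\ \Phi_{2^{m-1}}&-\Phi_{2^{m-1}}\end{bmatrix}$, $\Phi=\Phi_K$. $\Psi\in\mathbb{R}^{(K-1)\times(K-1)}$ is obtained from $1_K1_K^T-\Phi$ by deleting its first row and first column, indexed $1,\dots,K-1$. $\|\epsilon\|_1=\sum_i|\epsilon_i|$. *)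

From HB Require Import structures.
From mathcomp Require Import all_boot all_order all_algebra.
From mathcomp Require Import reals.
From mathcomp Require Import sequences exp.
Set Implicit Arguments. Unset Strict Implicit. Unset Printing Implicit Defensive.
Import Order.TTheory GRing.Theory Num.Theory.
Local Open Scope ring_scope.

(* Entries of the Sylvester Hadamard matrix Phi_{2^m}, 0-based indices,
   following the recursive block definition
   Phi_{2^(m+1)} = [Phi_{2^m}, Phi_{2^m}; Phi_{2^m}, -Phi_{2^m}]. *)
Fixpoint had {R : pzRingType} (m i j : nat) : R :=
  match m with
  | 0 => 1
  | m'.+1 =>
      let h := (2 ^ m')%N in
      let i' := if (i < h)%N then i else (i - h)%N in
      let j' := if (j < h)%N then j else (j - h)%N in
      if (h <= i)%N && (h <= j)%N then - had m' i' j' else had m' i' j'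
  end.

Definition Phi {R : pzRingType} (m : nat) : 'M[R]_(2 ^ m) :=
  \matrix_(i, j) had m i j.

(* Psi = (1 1^T - Phi) with first row and column deleted:
   entry (i,j) (0-based, i,j < 2^m - 1) is 1 - Phi_{i+1, j+1}. *)
Definition psi_entry {R : pzRingType} (m i j : nat) : R := 1 - had m i.+1 j.+1.

Definition Psi {R : pzRingType} (m : nat) : 'M[R]_(2 ^ m - 1) :=
  \matrix_(i, j) psi_entry m i j.

(* (Psi v)_1 : first entry (paper index 1) of Psi v. *)
Definition Psi_first {R : pzRingType} (m : nat) (v : 'cV[R]_(2 ^ m - 1)) : R :=
  \sum_(j < 2 ^ m - 1) psi_entry m 0 j * v j 0.

(* c_i = 1 for odd paper index i (1-based), i.e. 0-based index j with j+1 odd. *)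
Definition cvec {R : pzRingType} (m : nat) : 'cV[R]_(2 ^ m - 1) :=
  \col_j (if odd j.+1 then 1 else 0).

Definition l1norm {R : numDomainType} {n : nat} (v : 'cV[R]_n) : R :=
  \sum_i `|v i 0|.

Definition expv {R : realType} {n : nat} (v : 'cV[R]_n) : 'cV[R]_n :=
  \col_i expR (v i 0).

From HB Require Import structures.
From mathcomp Require Import all_boot all_order all_algebra.
From mathcomp Require Import reals.
From mathcomp Require Import sequences exp.
From mathcomp Require Import zify ring lra.
Set Implicit Arguments. Unset Strict Implicit. Unset Printing Implicit Defensive.
Import Order.TTheory GRing.Theory Num.Theory.
Local Open Scope ring_scope.

(* Since [Phi^2 = K I] and the first row and column of [Phi] are all ones,
   [Psi^2 = K (I + J)], [Psi 1 = K 1] and the first column of [Psi] is [2 c],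
   whence [Psi c = K/2 (1 + e_1)].  Therefore
   [exp (- Psi a) = e^{-K mu/2} exp x + (e^{-K mu} - e^{-K mu/2}) e^{x_1} e_1]
   with [x = - mu Psi eps].  Expanding [exp x = 1 + x + r] and using
   [Psi^2 eps = K eps] (as [sum eps = 0]) yields the stated first-order terms,
   with remainder [e^{-K mu/2} Psi r + 2 (e^{-K mu} - e^{-K mu/2}) r_1 c],
   where [|r_j| <= 2 x_j^2 <= 8 mu^2 |eps|_1^2]. *)

Lemma big_nat_double (V : nmodType) (F : nat -> V) h :
  \sum_(0 <= k < h + h) F k = \sum_(0 <= k < h) F k + \sum_(0 <= k < h) F (h + k)%N.
Proof.
rewrite (big_cat_nat (n := h)) ?leq_addr //; congr (_ + _).
by rewrite -{1}(add0n h) big_addn addnK; apply: eq_bigr => k _; rewrite addnC.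
Qed.

Section Hadamard.
Context {R : comPzRingType}.
Implicit Types m i j k : nat.

Local Notation low m i := (if i < 2 ^ m then i else i - 2 ^ m)%N.
Local Notation sign m i := (if (2 ^ m <= i)%N then -1 else 1 : R).

Lemma had_sym m i j : had (R:=R) m i j = had m j i.
Proof. by elim: m i j => [//|m IH] i j /=; rewrite IH andbC. Qed.

Lemma had0n m j : had (R:=R) m 0 j = 1.
Proof. by elim: m j => [//|m IH] j /=; rewrite leqNgt expn_gt0 /= IH. Qed.

Lemma had_eq_pm1 m i j : had (R:=R) m i j = 1 \/ had (R:=R) m i j = -1.
Proof.
elim: m i j => [|m IH] i j /=; first by left.
by case: ifP => _; case: (IH (low m i) (low m j)) => ->; rewrite ?opprK; [right|left|left|right].
Qed.

Lemma hadS_lo m i k : (k < 2 ^ m)%N -> had (R:=R) m.+1 i k = had m (low m i) k.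
Proof. by move=> hk /=; rewrite hk (leqNgt _ k) hk andbF. Qed.

Lemma hadS_hi m i k : (k < 2 ^ m)%N ->
  had (R:=R) m.+1 i (2 ^ m + k) = sign m i * had m (low m i) k.
Proof.
move=> hk /=; rewrite (ltnNge (2 ^ m + k)) leq_addr addKn andbT.
by case: ifP; rewrite ?mulN1r ?mul1r.
Qed.

Lemma low_lt m i : (i < 2 ^ m.+1)%N -> (low m i < 2 ^ m)%N.
Proof. by rewrite expnS; case: ifP => // _; lia. Qed.

Lemma had_orth m i j : (i < 2 ^ m)%N -> (j < 2 ^ m)%N ->
  \sum_(0 <= k < 2 ^ m) had (R:=R) m i k * had m j k = (i == j)%:R * (2 ^ m)%:R.
Proof.
elim: m i j => [|m IH] i j hi hj.
  by rewrite expn0 in hi hj *; case: i j hi hj => [|//] [|//] _ _; rewrite big_nat1 mulr1.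
have Sm : (2 ^ m.+1 = 2 ^ m + 2 ^ m)%N by rewrite expnS mul2n addnn.
rewrite Sm big_nat_double.
under eq_big_nat => k /andP[_ hk] do rewrite !hadS_lo //.
under [X in _ + X]eq_big_nat => k /andP[_ hk] do
  rewrite !hadS_hi // mulrACA.
rewrite -mulr_sumr IH ?low_lt // natrD.
case: (ltnP i (2 ^ m)) => hi2; case: (ltnP j (2 ^ m)) => hj2.
- ring.
- have -> : (i == j) = false by apply/negbTE; apply/eqP; lia.
  rewrite mul0r; ring.
- have -> : (i == j) = false by apply/negbTE; apply/eqP; lia.
  rewrite mul0r; ring.
- by rewrite eqn_sub2rE //; ring.
Qed.

Lemma had_row_sum m i : (i < 2 ^ m)%N ->
  \sum_(0 <= k < 2 ^ m) had (R:=R) m i k = (i == 0%N)%:R * (2 ^ m)%:R.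
Proof.
move=> hi; rewrite -had_orth ?expn_gt0 //.
by apply: eq_bigr => k _; rewrite had0n mulr1.
Qed.

Lemma had_n1 m i : (0 < m)%N -> (i < 2 ^ m)%N ->
  had (R:=R) m i 1 = if odd i then -1 else 1.
Proof.
elim: m i => [//|[|m] IH] i _ hi; first by case: i hi => [|[|]].
rewrite hadS_lo; last by rewrite expnS; have := expn_gt0 2 m; lia.
case: ifP => hlt; first exact: IH.
have hge : (2 ^ m.+1 <= i)%N by rewrite leqNgt hlt.
rewrite IH //; last by rewrite expnS in hi; lia.
by rewrite oddB // oddX /= addbF.
Qed.

End Hadamard.

Definition col_e0 {R : pzRingType} n : 'cV[R]_n := \col_i ((i : nat) == 0%N)%:R.

Lemma big_ord_mul_eq0 (R : pzSemiRingType) n (F : nat -> R) : (0 < n)%N ->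
  \sum_(k < n) F k * ((k : nat) == 0%N)%:R = F 0%N.
Proof.
move=> n_gt0; rewrite -(big_mkord xpredT (fun k => F k * (k == 0%N)%:R)) big_ltn //.
rewrite mulr1 big1_seq ?addr0 // => k.
by rewrite mem_index_iota => /and3P[_ k_gt0 _]; rewrite gtn_eqF // mulr0.
Qed.

Section PsiMatrix.
Context {R : comPzRingType} (m : nat).
Local Notation N := (2 ^ m - 1)%N.
Local Notation K := ((2 ^ m)%:R : R).

Lemma expn2_subn1S : (2 ^ m - 1).+1 = (2 ^ m)%N.
Proof. by rewrite subn1 prednK // expn_gt0. Qed.

Lemma expn2_subn1_gt0 : (0 < m)%N -> (0 < 2 ^ m - 1)%N.
Proof. by move=> m_gt0; rewrite subn_gt0 -(expn0 2) ltn_exp2l. Qed.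

Lemma ltnS_expn2 i : (i < 2 ^ m - 1)%N -> (i.+1 < 2 ^ m)%N.
Proof. by rewrite -ltnS expn2_subn1S. Qed.

Lemma big_ord_expn2_subn1 (F : nat -> R) :
  \sum_(j < N) F j.+1 = \sum_(0 <= l < 2 ^ m) F l - F 0%N.
Proof. by rewrite -[in RHS]expn2_subn1S big_nat_recl // big_mkord addrAC subrr add0r. Qed.

Lemma psi_row_sum (i : 'I_N) : \sum_(j < N) psi_entry (R:=R) m i j = K.
Proof.
rewrite /psi_entry sumrB big_ord_expn2_subn1 had_row_sum; last exact: ltnS_expn2.
by rewrite sumr_const card_ord had_sym had0n natrB ?expn_gt0 //= mul0r; ring.
Qed.

Lemma psi_sqr (i k : 'I_N) :
  \sum_(j < N) psi_entry (R:=R) m i j * psi_entry m j k = (i == k)%:R * K + K.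
Proof.
rewrite /psi_entry (eq_bigr (fun j : 'I_N => 1 - had m i.+1 j.+1 - had m k.+1 j.+1
  + had m i.+1 j.+1 * had m k.+1 j.+1)); last by move=> j _; rewrite (had_sym m j.+1); ring.
rewrite big_split !sumrB /= (big_ord_expn2_subn1 (fun l => had m i.+1 l * had m k.+1 l)) !big_ord_expn2_subn1.
rewrite !had_row_sum ?had_orth ?ltnS_expn2 //.
rewrite sumr_const card_ord -val_eqE !(had_sym m _ 0) !had0n natrB ?expn_gt0 //= eqSS; ring.
Qed.

Lemma psi_entry_n0 i : (0 < m)%N -> (i < N)%N ->
  psi_entry (R:=R) m i 0 = if odd i.+1 then 2 else 0.
Proof.
move=> m_gt0 i_lt; rewrite /psi_entry had_n1 ?ltnS_expn2 //.
by case: ifP => _; ring.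
Qed.

Lemma Psi_mul_const1 : Psi m *m const_mx 1 = K *: (const_mx 1 : 'cV[R]_N).
Proof.
apply/matrixP => i j; rewrite !mxE mulr1.
by under eq_bigr do rewrite !mxE mulr1; exact: psi_row_sum.
Qed.

Lemma Psi_mul_Psi : Psi m *m Psi m = K *: (1%:M + const_mx (1 : R)).
Proof.
apply/matrixP => i k; rewrite !mxE.
by under eq_bigr do rewrite !mxE; rewrite psi_sqr mulrDr mulr1 mulrC.
Qed.

Lemma Psi_mul_Psi_sum0 (v : 'cV[R]_N) :
  \sum_i v i 0 = 0 -> Psi m *m (Psi m *m v) = K *: v.
Proof.
move=> v_sum0; rewrite mulmxA Psi_mul_Psi -scalemxAl mulmxDl mul1mx.
suff -> : (const_mx 1 : 'M[R]_N) *m v = 0 by rewrite addr0.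
apply/matrixP => i j; rewrite ord1 !mxE -[RHS]v_sum0.
by apply: eq_bigr => k _; rewrite mxE mul1r.
Qed.

Lemma Psi_mul_e0 : (0 < m)%N -> Psi m *m col_e0 N = 2 *: cvec (R:=R) m.
Proof.
move=> m_gt0; apply/matrixP => i j; rewrite ord1 !mxE.
under eq_bigr do rewrite !mxE.
rewrite (big_ord_mul_eq0 (fun k => psi_entry m i k)) ?expn2_subn1_gt0 //.
by rewrite psi_entry_n0 //; case: ifP => _; rewrite ?mulr1 ?mulr0.
Qed.

Lemma Psi_first_mxE (v : 'cV[R]_N) (i : 'I_N) :
  i = 0%N :> nat -> Psi_first v = (Psi m *m v) i 0.
Proof. by move=> i0; rewrite mxE; apply: eq_bigr => j _; rewrite mxE i0. Qed.

End PsiMatrix.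

Lemma normr_psi_entry_le2 (R : numDomainType) m i j : `|psi_entry (R:=R) m i j| <= 2.
Proof.
rewrite /psi_entry; case: (had_eq_pm1 (R:=R) m i.+1 j.+1) => ->.
  by rewrite subrr normr0.
by rewrite opprK -mulr2n normr_nat.
Qed.

Lemma Psi_mul_cvec (R : numFieldType) m : (0 < m)%N ->
  Psi m *m cvec m = ((2 ^ m)%:R / 2) *: (const_mx 1 + col_e0 (R:=R) (2 ^ m - 1)).
Proof.
move=> m_gt0.
have -> : cvec m = 2^-1 *: (Psi m *m col_e0 (R:=R) (2 ^ m - 1)).
  by rewrite Psi_mul_e0 // scalerA mulVf ?pnatr_eq0 // scale1r.
rewrite -scalemxAr mulmxA Psi_mul_Psi -scalemxAl mulmxDl mul1mx scalerA mulrC.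
suff -> : (const_mx 1 : 'M[R]_(2 ^ m - 1)) *m col_e0 _ = const_mx 1 by rewrite addrC.
apply/matrixP => i j; rewrite !mxE.
under eq_bigr do rewrite !mxE.
exact: (big_ord_mul_eq0 (fun=> 1)) (expn2_subn1_gt0 m_gt0).
Qed.

Section L1norm.
Context {R : numDomainType}.

Lemma l1norm_ge0 n (v : 'cV[R]_n) : 0 <= l1norm v.
Proof. by apply: sumr_ge0 => i _; exact: normr_ge0. Qed.

Lemma l1normD n (u v : 'cV[R]_n) : l1norm (u + v) <= l1norm u + l1norm v.
Proof. by rewrite -big_split; apply: ler_sum => i _; rewrite mxE ler_normD. Qed.

Lemma l1normZ n a (v : 'cV[R]_n) : l1norm (a *: v) = `|a| * l1norm v.
Proof. by rewrite mulr_sumr; apply: eq_bigr => i _; rewrite mxE normrM. Qed.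

Lemma l1norm_le n (v : 'cV[R]_n) b : (forall i, `|v i 0| <= b) -> l1norm v <= n%:R * b.
Proof.
move=> v_le; apply: le_trans (ler_sum _ (fun i _ => v_le i)) _.
by rewrite sumr_const card_ord mulr_natl.
Qed.

Lemma normr_mulmx_le p n (A : 'M[R]_(p, n)) (v : 'cV[R]_n) b :
  (forall i j, `|A i j| <= b) -> forall i, `|(A *m v) i 0| <= b * l1norm v.
Proof.
move=> A_le i; rewrite mxE mulr_sumr; apply: le_trans (ler_norm_sum _ _ _) _.
apply: ler_sum => j _; rewrite normrM.
by apply: ler_wpM2r; [exact: normr_ge0 | exact: A_le].
Qed.

End L1norm.

(* [expR x * expR (- x) = 1] and [1 - x <= expR (- x)] give [expR x <= 1 / (1 - x)]. *)
Lemma normr_expR_sub1Dx_le (R : realType) (x b : R) :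
  `|x| <= b -> b <= 1 / 2 -> `|expR x - 1 - x| <= 2 * b ^+ 2.
Proof.
rewrite ler_norml => /andP[x_ge x_le] b_small.
have lb := expR_ge1Dx x; have lbN := expR_ge1Dx (- x).
have inv := expRxMexpNx_1 x; have pos := expR_gt0 x.
by rewrite ger0_norm; nra.
Qed.

Lemma l1norm_expv_sub1Dx_le (R : realType) n (x : 'cV[R]_n) b :
  (forall i, `|x i 0| <= b) -> b <= 1 / 2 ->
  l1norm (expv x - const_mx 1 - x) <= n%:R * (2 * b ^+ 2).
Proof.
by move=> x_le b_small; apply: l1norm_le => i; rewrite !mxE normr_expR_sub1Dx_le.
Qed.

Section Expansion.
Variables (R : realType) (m : nat) (mu : R).
Local Notation N := (2 ^ m - 1)%N.
Local Notation K := ((2 ^ m)%:R : R).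
Local Notation E1 := (expR (- (K * mu))).
Local Notation E2 := (expR (- (K * mu / 2))).

Definition expansion_const : R :=
  (2 * N%:R ^+ 2 * E2 + 2 * N%:R * `|E1 - E2|) * (8 * mu ^+ 2).

Hypothesis m_gt0 : (0 < m)%N.
Variable eps : 'cV[R]_N.
Hypothesis eps_sum0 : \sum_i eps i 0 = 0.
Local Notation x := (- mu *: (Psi m *m eps)).
Local Notation s := (- (mu * Psi_first eps)).

Lemma expv_Psi_a :
  expv (- (Psi m *m (mu *: cvec m + mu *: eps)))
  = E2 *: expv x + ((E1 - E2) * expR s) *: col_e0 N.
Proof.
rewrite mulmxDr -!scalemxAr Psi_mul_cvec //.
have E_cvec (b : bool) : expR (- (mu * (K / 2 * (1 + b%:R)))) = E2 + (E1 - E2) * b%:R.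
  by case: b; rewrite /= ?mulr1 ?mulr0 ?addr0 ?(addrC E2) ?subrK; congr expR; field.
apply/matrixP => j k; rewrite ord1 !mxE opprD expRD E_cvec mulNr.
by case: eqP => [j0 | _] /=; rewrite ?(Psi_first_mxE eps j0) ?mxE; ring.
Qed.

Lemma Psi_expv_expansion :
  Psi m *m expv (- (Psi m *m (mu *: cvec m + mu *: eps)))
  - (K * E2 *: const_mx 1 - (K * E2 * mu) *: eps
     + (2 * (E1 - E2) * (1 - mu * Psi_first eps)) *: cvec m)
  = E2 *: (Psi m *m (expv x - const_mx 1 - x))
    + (2 * (E1 - E2) * (expR s - 1 - s)) *: cvec m.
Proof.
rewrite expv_Psi_a !(mulmxDr, mulmxN) -!scalemxAr.
rewrite Psi_mul_e0 // Psi_mul_const1 Psi_mul_Psi_sum0 //.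
apply/matrixP => i j; rewrite !mxE.
(* [ring] does not take the [if] coming from [cvec] as an atom. *)
by set c := if _ then _ else _; ring.
Qed.

Lemma Psi_expv_remainder_le : 4 * `|mu| * l1norm eps <= 1 ->
  l1norm (E2 *: (Psi m *m (expv x - const_mx 1 - x))
          + (2 * (E1 - E2) * (expR s - 1 - s)) *: cvec m)
  <= expansion_const * l1norm eps ^+ 2.
Proof.
set L := l1norm eps; set b := `|mu| * (2 * L) => eps_small.
have b_small : b <= 1 / 2 by rewrite /b; lra.
have Psi_le (i j : 'I_N) : `|Psi (R:=R) m i j| <= 2 by rewrite mxE normr_psi_entry_le2.
have Psi_eps_le (i : 'I_N) : `|mu * (Psi m *m eps) i 0| <= b.
  by rewrite normrM ler_wpM2l // normr_mulmx_le.
have x_le (i : 'I_N) : `|x i 0| <= b by rewrite mxE mulNr normrN; exact: Psi_eps_le.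
have s_le : `|s| <= b.
  by rewrite normrN (Psi_first_mxE eps (i := Ordinal (expn2_subn1_gt0 m_gt0))) //; exact: Psi_eps_le.
have rem_le := l1norm_expv_sub1Dx_le x_le b_small.
have srem_le := normr_expR_sub1Dx_le s_le b_small.
have Psi_rem_le : l1norm (Psi m *m (expv x - const_mx 1 - x))
                  <= N%:R * (2 * (N%:R * (2 * b ^+ 2))).
  apply: l1norm_le => i.
  apply: le_trans (normr_mulmx_le (expv x - const_mx 1 - x) Psi_le i) _.
  by apply: ler_wpM2l rem_le.
have cvec_le : l1norm (cvec (R:=R) m) <= N%:R * 1.
  by apply: l1norm_le => i; rewrite mxE; case: ifP; rewrite ?normr1 ?normr0.
apply: le_trans (l1normD _ _) _; rewrite !l1normZ (gtr0_norm (expR_gt0 _)) !normrM.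
have term1 := ler_wpM2l (ltW (expR_gt0 (- (K * mu / 2)))) Psi_rem_le.
have term2 : `|2| * `|E1 - E2| * `|expR s - 1 - s| * l1norm (cvec m)
             <= 2 * `|E1 - E2| * (2 * b ^+ 2) * (N%:R * 1).
  rewrite normr_nat; apply: ler_pM; rewrite ?mulr_ge0 ?l1norm_ge0 //.
  by apply: ler_wpM2l srem_le; rewrite mulr_ge0.
apply: le_trans (lerD term1 term2) _.
rewrite /expansion_const /b exprMn real_normK ?num_real //.
lra.
Qed.

End Expansion.

Theorem lemmaD9 (R : realType) (m : nat) (mu : R) :
  exists C : R, exists delta : R, 0 < delta /\
    forall eps : 'cV[R]_(2 ^ m - 1),
      \sum_i eps i 0 = 0 ->
      l1norm eps < delta ->
      let a := mu *: cvec m + mu *: eps in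
      mu = 2 / (2 ^ m)%:R * l1norm a ->
      let K : R := (2 ^ m)%:R in
      l1norm (Psi m *m expv (- (Psi m *m a))
              - (K * expR (- (K * mu / 2)) *: const_mx 1
                 - (K * expR (- (K * mu / 2)) * mu) *: eps
                 + (2 * (expR (- (K * mu)) - expR (- (K * mu / 2)))
                      * (1 - mu * Psi_first eps)) *: cvec m))
        <= C * l1norm eps ^+ 2.
Proof.
case: m => [|m].
  by exists 0, 1; split => // eps _ _ a _; cbv zeta; rewrite /l1norm big_ord0 mul0r.
have mu_ge0 := normr_ge0 mu.
exists (expansion_const m.+1 mu), (1 / (4 * `|mu| + 1)); split; first by rewrite divr_gt0 //; lra.
move=> eps eps_sum0 eps_small a _; cbv zeta; rewrite /a Psi_expv_expansion //.
apply: Psi_expv_remainder_le => //.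
move: eps_small; rewrite ltr_pdivlMr; last by lra.
have := l1norm_ge0 eps; nra.
Qed.
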